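(* Let $m,k$ be positive integers with $m>k+2$, and let $\pi$ be a permutation of $\mathbb{F}_{2^m}$ satisfying Property (P) (defined in the context). For each $z\in\mathbb{F}_{2^k}$ define $f^{(z)}:\mathbb{F}_{2^m}\times\mathbb{F}_{2^m}\to\mathbb{F}_2$ by \[ f^{(z)}(x_1,x_2)=\begin{cases}{\rm Tr}_1^m\bigl(x_1\,\pi(x_2)\bigr), & \text{if } {\rm Tr}_1^k(z)=0,\\ {\rm Tr}_1^m\bigl(x_2\,\pi(x_1)\bigr), & \text{if } {\rm Tr}_1^k(z)=1.\end{cases} \] Then the function $f:\mathbb{F}_{2^m}\times\mathbb{F}_{2^m}\times\mathbb{F}_{2^k}\times\mathbb{F}_{2^k}\to\mathbb{F}_2$, $f(x_1,x_2,y,z)=f^{(z)}(x_1,x_2)+{\rm Tr}_1^k(yz)$, is a GMM function that does not belong to the class $MM^{\#}$.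
   Context: ${\rm Tr}_a^b$ denotes the trace map from $\mathbb{F}_{2^b}$ to $\mathbb{F}_{2^a}$. Property (P) of a permutation $\pi$ of $\mathbb{F}_{2^m}$: for all $(a_1,a_2),(b_1,b_2)\in\mathbb{F}_{2^m}\times\mathbb{F}_{2^m}$, the two identities $\pi(x)+\pi(x+a_2)+\pi(x+b_2)+\pi(x+a_2+b_2)=0$ and ${\rm Tr}_1^m\bigl(a_1\pi(x+a_2)+b_1\pi(x+b_2)+(a_1+b_1)\pi(x+a_2+b_2)\bigr)=0$ hold for all $x\in\mathbb{F}_{2^m}$ if and only if one of the following holds: $(a_1,a_2)=(0,0)$, $(b_1,b_2)=(0,0)$, $(a_1,a_2)=(b_1,b_2)$, or $a_2=b_2=0$. A Boolean function $g$ on an $n$-dimensional $\mathbb{F}_2$-space $V$ is bent if $|\sum_{x\in V}(-1)^{g(x)+\langle b,x\rangle}|=2^{n/2}$ for all $b\in V$ (for a nondegenerate inner product). A GMM (generalized Maiorana–McFarland) function is a function of the form $f(x,y,z)=f^{(z)}(x)+{\rm Tr}_1^k(yz)$ on $W\times\mathbb{F}_{2^k}\times\mathbb{F}_{2^k}$ where every $f^{(z)}$ is bent on $W$. Two Boolean functions $f,g$ on $V$ are EA-equivalent if $g(x)=f(L(x)+a)+\langle c,x\rangle+b$ with $L$ a linear permutation of $V$, $a,c\in V$, $b\in\mathbb{F}_2$. The Maiorana–McFarland class $MM$ on $\mathbb{F}_{2^N}\times\mathbb{F}_{2^N}$ consists of functions ${\rm Tr}_1^N(x\pi'(y))+g(y)$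 with $\pi'$ a permutation of $\mathbb{F}_{2^N}$ and $g$ arbitrary; $MM^{\#}$ denotes the set of all Boolean functions on a $2N$-dimensional $\mathbb{F}_2$-space that are EA-equivalent (after an $\mathbb{F}_2$-linear identification of the space with $\mathbb{F}_{2^N}\times\mathbb{F}_{2^N}$) to a function of $MM$. *)

From HB Require Import structures.
From mathcomp Require Import all_boot all_order all_algebra.
Set Implicit Arguments. Unset Strict Implicit. Unset Printing Implicit Defensive.
Import Order.TTheory GRing.Theory Num.Theory.
Local Open Scope ring_scope.

(* Absolute trace Tr_1^n on a field of order 2^n, as an element of the field
   (it lies in the prime subfield {0,1}). *)
Definition tr (F : fieldType) (n : nat) (x : F) : F := \sum_(i < n) x ^+ (2 ^ i).

(* The same trace viewed as an element of F_2 = bool (xor is addition). *)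
Definition trb (F : fieldType) (n : nat) (x : F) : bool := tr n x == 1.

Definition propertyP (F : fieldType) (m : nat) (pi : F -> F) : Prop :=
  forall a1 a2 b1 b2 : F,
    ((forall x, pi x + pi (x + a2) + pi (x + b2) + pi (x + a2 + b2) = 0) /\
     (forall x, tr m (a1 * pi (x + a2) + b1 * pi (x + b2)
                      + (a1 + b1) * pi (x + a2 + b2)) = 0))
    <-> ((a1, a2) = (0, 0) \/ (b1, b2) = (0, 0) \/ (a1, a2) = (b1, b2)
         \/ (a2 = 0 /\ b2 = 0)).

Definition ip2 (F : fieldType) (n : nat) (u w : F * F) : bool :=
  trb n (u.1 * w.1 + u.2 * w.2).

Definition bent (F : finFieldType) (m : nat) (g : F * F -> bool) : Prop :=
  forall b : F * F,
    `| \sum_(w : F * F) (-1 : int) ^+ (g w (+) ip2 m b w) | = (2 ^ m)%:Z.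

Definition isGMM (F K : finFieldType) (m k : nat) (f : F * F * K * K -> bool)
  : Prop :=
  exists g : K -> F * F -> bool,
    (forall z, bent m (g z)) /\
    (forall (w : F * F) (y z : K), f (w, y, z) = g z w (+) trb k (y * z)).

(* F_2-linear map between F_2-spaces (in characteristic 2, additivity). *)
Definition additive_map (U V : zmodType) (phi : U -> V) : Prop :=
  forall u v, phi (u + v) = phi u + phi v.

Definition MMfun (L : fieldType) (N : nat) (pi' : L -> L) (g : L -> bool)
  (w : L * L) : bool := trb N (w.1 * pi' w.2) (+) g w.2.

Definition isMM (L : fieldType) (N : nat) (h : L * L -> bool) : Prop :=
  exists (pi' : L -> L) (g : L -> bool), bijective pi' /\ h =1 MMfun N pi' g.

(* MM#: f on the 2N-dimensional F_2-space V is in MM# if, after some F_2-linear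
   identification phi : V -> L x L (L = F_{2^N}), the function f o phi^-1 is
   EA-equivalent to an MM function h, i.e.
   (f o phi^-1)(w) = h(A w + a) + <c,w> + b with A a linear permutation. *)
Definition inMMsharp (V : zmodType) (L : fieldType) (N : nat) (f : V -> bool)
  : Prop :=
  exists phi : V -> L * L, additive_map phi /\ bijective phi /\
  exists h : L * L -> bool, isMM N h /\
  exists (A : L * L -> L * L) (a c : L * L) (b : bool),
    additive_map A /\ bijective A /\
    forall v : V, f v = h (A (phi v) + a) (+) ip2 N c (phi v) (+) b.

Definition fz (F K : finFieldType) (m k : nat) (pi : F -> F) (z : K)
  (w : F * F) : bool :=
  if tr k z == 0 then trb m (w.1 * pi w.2) else trb m (w.2 * pi w.1).

Definition fthm (F K : finFieldType) (m k : nat) (pi : F -> F)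
  (v : F * F * K * K) : bool :=
  fz m k pi v.2 v.1.1 (+) trb k (v.1.2 * v.2).

(* f is GMM because each slice f^(z) is, possibly after swapping x1 and x2,
   the Maiorana-McFarland function Tr(x1 pi(x2)), which is bent.

   Every function of MM# admits an (m+k)-dimensional subspace of directions
   along which all its second-order derivatives vanish: the preimage of
   F_{2^(m+k)} x 0 under the linear identification.  For f, restricting to the
   slices Tr(z) = 0 and Tr(z) = 1 and applying Property (P) to both coordinate
   orders shows that two such directions with zero (y,z)-part have equal or
   zero (x1,x2)-part.  Hence the subspace is at most 2-to-1 over its
   (y,z)-projection, so 2^(m+k) <= 2 * 2^(2k), which contradicts m > k + 2. *)

From HB Require Import structures.
From mathcomp Require Import all_boot all_order all_algebra all_field.
From mathcomp Require Import zify ring.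
Set Implicit Arguments. Unset Strict Implicit. Unset Printing Implicit Defensive.
Import Order.TTheory GRing.Theory Num.Theory.
Local Open Scope ring_scope.

Section Trace.
Variables (F : finFieldType) (n : nat).
Hypothesis cardF : #|F| = (2 ^ n)%N.

Lemma card_exp_gt0 : (0 < n)%N.
Proof. by case: n cardF => // /(congr1 (leq 2)); rewrite card_finNzRing_gt1. Qed.

Lemma pchar2_card : 2%N \in [pchar F].
Proof. exact: card_finPcharP cardF _. Qed.

Lemma addrr2 (x : F) : x + x = 0.
Proof. exact: addrr_pchar2 pchar2_card x. Qed.

Lemma exprD_pow2 i (x y : F) : (x + y) ^+ (2 ^ i) = x ^+ (2 ^ i) + y ^+ (2 ^ i).
Proof.
elim: i => [|i IHi]; first by rewrite !expr1.
by rewrite expnSr !exprM IHi sqrrD mulr2n addrr2 addr0.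
Qed.

Lemma trD (x y : F) : tr n (x + y) = tr n x + tr n y.
Proof. by rewrite /tr -big_split; apply: eq_bigr => i _; rewrite exprD_pow2. Qed.

Lemma tr0 : tr n (0 : F) = 0.
Proof. by rewrite /tr big1 // => i _; rewrite expr0n expn_eq0. Qed.

(* Squaring shifts the powers x^(2^i) cyclically, as x^(2^n) = x. *)
Lemma tr_sqr (x : F) : tr n x ^+ 2 = tr n x.
Proof.
rewrite /tr (big_morph (fun y : F => y ^+ 2) (id1 := 0) (op1 := +%R)) => [|y z|];
  last 2 first; [by rewrite -(exprD_pow2 1) | by rewrite expr0n |].
case: n cardF card_exp_gt0 => // n' cardF' _.
rewrite big_ord_recr big_ord_recl /= -exprM -expnSr -cardF' expf_card expr1 addrC.
by congr (_ + _); apply: eq_bigr => i _; rewrite -exprM -expnSr.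
Qed.

Lemma tr_eq01 (x : F) : tr n x = 0 \/ tr n x = 1.
Proof.
have /eqP : tr n x * (tr n x - 1) = 0 by rewrite mulrBr mulr1 -expr2 tr_sqr subrr.
by rewrite mulf_eq0 subr_eq0 => /orP[] /eqP; [left | right].
Qed.

Lemma trbD (x y : F) : trb n (x + y) = trb n x (+) trb n y.
Proof.
rewrite /trb trD; case: (tr_eq01 x) => ->; case: (tr_eq01 y) => ->;
  by rewrite ?addr0 ?add0r ?addrr2 ?eqxx //= ?(eq_sym 0) oner_eq0.
Qed.

Lemma trb0 : trb n (0 : F) = false.
Proof. by rewrite /trb tr0 eq_sym oner_eq0. Qed.

(* Tr is a polynomial of degree 2^(n-1) < #|F|, so it cannot vanish on F. *)
Lemma exists_tr1 : exists t : F, tr n t = 1.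
Proof.
pose P : {poly F} := \sum_(i < n) 'X^(2 ^ i).
have hornerP x : P.[x] = tr n x.
  by rewrite /P horner_sum; apply: eq_bigr => i _; rewrite hornerXn.
have [n' n_eq] : exists n', n = n'.+1 by case: n card_exp_gt0 => // n' _; exists n'.
have sizeP : size P = (2 ^ n').+1.
  rewrite /P n_eq big_ord_recr /= addrC size_polyDl size_polyXn //.
  apply: leq_ltn_trans (size_sum _ _ _) _; rewrite ltnS.
  by apply/bigmax_leqP => i _; rewrite size_polyXn ltn_exp2l.
have P_neq0 : P != 0 by rewrite -size_poly_eq0 sizeP.
have : ~~ all (root P) (enum F).
  apply/negP => /(max_poly_roots P_neq0)/(_ (enum_uniq _)).
  by rewrite -cardE cardF n_eq sizeP expnS; lia.
case/allPn => t _; rewrite /root hornerP => trt; exists t.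
by case: (tr_eq01 t) trt => ->; rewrite ?eqxx.
Qed.

Lemma trb_affine_eq0 (d c : F) :
  (forall x, trb n (x * d + c) = false) -> d = 0 /\ tr n c = 0.
Proof.
move=> affine0; have trbc : trb n c = false by rewrite -(affine0 0) mul0r add0r.
split; last by move: trbc; rewrite /trb; case: (tr_eq01 c) => ->; rewrite ?eqxx.
apply/eqP/negP => /negP d_neq0; have [t trt] := exists_tr1.
by have := affine0 (t / d); rewrite divfK // trbD trbc /trb trt eqxx.
Qed.

Lemma sum_sign_trb (e : F) :
  \sum_(x : F) (-1 : int) ^+ trb n (x * e) = if e == 0 then #|F|%:Z else 0.
Proof.
have [->|e_neq0] := eqVneq e 0.
  by rewrite (eq_bigr (fun _ => 1)) ?sumr_const ?natz // => x _; rewrite mulr0 trb0.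
have [t trt] := exists_tr1; set S := \sum_(x : F) _.
have : S = - S.
  rewrite {1}/S (reindex_inj (addrI (t / e))) /= -sumrN; apply: eq_bigr => x _.
  by rewrite mulrDl divfK // trbD signr_addb /trb trt eqxx expr1 mulN1r.
by move/eqP; rewrite -addr_eq0 -mulr2n -mulr_natl mulf_eq0 => /orP[] /eqP.
Qed.

End Trace.

Section BentMM.
Variables (F : finFieldType) (m : nat) (pi : F -> F).
Hypothesis cardF : #|F| = (2 ^ m)%N.
Hypothesis pi_bij : bijective pi.

Lemma bent_trMM : bent m (fun w : F * F => trb m (w.1 * pi w.2)).
Proof.
have [pinv piK pinvK] := pi_bij.
have trbD := trbD cardF; move=> [b1 b2]; rewrite /ip2 /=.
(* Summing over x1 first kills every x2 except pi^-1(b1). *)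
rewrite -(pair_big xpredT xpredT (fun x1 x2 =>
  (-1 : int) ^+ (trb m (x1 * pi x2) (+) trb m (b1 * x1 + b2 * x2)))) exchange_big /=.
rewrite (eq_bigr (fun x2 =>
  (-1) ^+ trb m (b2 * x2) * (if x2 == pinv b1 then #|F|%:Z else 0))); last first.
  move=> x2 _; have -> : (x2 == pinv b1) = (pi x2 + b1 == 0).
    rewrite addr_eq0 (oppr_pchar2 (pchar2_card cardF)).
    by apply/eqP/eqP => [->|<-]; rewrite ?piK ?pinvK.
  rewrite -(sum_sign_trb cardF) mulr_sumr; apply: eq_bigr => x1 _.
  rewrite -signr_addb mulrDr (mulrC x1 b1) !trbD.
  by case: (trb m (x1 * pi x2)); case: (trb m (b1 * x1)); case: (trb m (b2 * x2)).
rewrite (bigD1 (pinv b1)) //= eqxx big1 => [|x2 /negbTE ->]; last by rewrite mulr0.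
by rewrite addr0 normrM normr_sign mul1r cardF.
Qed.

Lemma bent_trMM_swap : bent m (fun w : F * F => trb m (w.2 * pi w.1)).
Proof.
move=> b; rewrite -(bent_trMM (b.2, b.1)).
rewrite (reindex_inj (h := fun w : F * F => (w.2, w.1))); last by move=> [? ?] [? ?] [-> ->].
by congr `|_|; apply: eq_bigr => w _; rewrite /ip2 /= addrC.
Qed.

End BentMM.

Definition vanishing_D2 (V : zmodType) (f : V -> bool) (u v : V) : Prop :=
  forall x, f x (+) f (x + u) (+) f (x + v) (+) f (x + u + v) = false.

Section SecondDerivative.
Variables (V W : zmodType).

Lemma eq_vanishing_D2 (f g : V -> bool) u v :
  f =1 g -> vanishing_D2 g u v -> vanishing_D2 f u v.
Proof. by move=> fg D2g x; rewrite !fg. Qed.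

Lemma vanishing_D2_xor (f g : V -> bool) u v :
  vanishing_D2 f u v -> vanishing_D2 g u v ->
  vanishing_D2 (fun x => f x (+) g x) u v.
Proof.
move=> D2f D2g x; move: (D2f x) (D2g x).
by case: (f x); case: (f (x + u)); case: (f (x + v)); case: (f (x + u + v));
   case: (g x); case: (g (x + u)); case: (g (x + v)); case: (g (x + u + v)).
Qed.

Lemma vanishing_D2_affine (l : V -> bool) (b : bool) u v :
  (forall x y, l (x + y) = l x (+) l y) -> vanishing_D2 (fun x => l x (+) b) u v.
Proof.
move=> lD x; rewrite !lD.
by case: (l x); case: (l u); case: (l v); case: b.
Qed.

Lemma vanishing_D2_comp (h : W -> bool) (psi : V -> W) (a : W) u v :
  additive_map psi -> vanishing_D2 h (psi u) (psi v) ->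
  vanishing_D2 (fun x => h (psi x + a)) u v.
Proof.
by move=> psiD D2h x; rewrite !psiD -(D2h (psi x + a)) !(addrAC _ a).
Qed.

Lemma additive_mapB (psi : V -> W) u v :
  additive_map psi -> psi (u - v) = psi u - psi v.
Proof. by move=> psiD; rewrite -{2}(subrK v u) psiD addrK. Qed.

End SecondDerivative.

Lemma card_le_2to1 (T W : finType) (key : T -> W) :
  (forall s t u, key s = key t -> key s = key u -> [\/ s = t, s = u | t = u]) ->
  (#|T| <= 2 * #|W|)%N.
Proof.
move=> two_to_one.
pose r t := odflt t [pick s | key s == key t].
have keyr t : key (r t) = key t.
  by rewrite /r; case: pickP => [s /eqP | /(_ t)] //; rewrite eqxx.
have r_key s t : key s = key t -> r s = r t.
  by move=> kst; rewrite /r kst; case: pickP => [//|/(_ t)]; rewrite eqxx.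
pose iota t := (key t, t == r t).
have iota_inj : injective iota.
  move=> t t' [keyt]; rewrite (r_key t' t) //.
  have [<-|tr] := eqVneq t (r t); first by move/esym/eqP.
  have [//|t'r _] := eqVneq t' (r t).
  have := two_to_one (r t) t t'; rewrite !keyr keyt => /(_ erefl erefl).
  by case=> // eqt; [move: tr | move: t'r]; rewrite eqt eqxx.
by have := leq_card iota iota_inj; rewrite card_prod card_bool mulnC.
Qed.

Section MaioranaMcFarland.
Variables (L : finFieldType) (N : nat).
Hypothesis cardL : #|L| = (2 ^ N)%N.

Lemma ip2D (c p q : L * L) : ip2 N c (p + q) = ip2 N c p (+) ip2 N c q.
Proof. by rewrite /ip2 /= -(trbD cardL); congr (trb N _); ring. Qed.

Lemma MMfun_vanishing_D2 (pi' : L -> L) (g : L -> bool) d d' :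
  vanishing_D2 (MMfun N pi' g) (d, 0) (d', 0).
Proof.
move=> w; rewrite /MMfun /= !addr0 !mulrDl !(trbD cardL).
by case: (trb N (w.1 * _)); case: (trb N (d * _)); case: (trb N (d' * _)); case: (g _).
Qed.

(* Phi is the inverse identification restricted to L x 0. *)
Lemma inMMsharp_vanishing_D2 (V : zmodType) (f : V -> bool) :
  inMMsharp L N f ->
  exists Phi : L -> V, [/\ additive_map Phi, injective Phi &
                          forall d d', vanishing_D2 f (Phi d) (Phi d')].
Proof.
move=> [phi [phiD [phi_bij [h [[pi' [g [_ hE]]] [A [a [c [b [AD [A_bij fE]]]]]]]]]]].
have [Psi' PsiK PsiK'] := bij_comp A_bij phi_bij.
have PhiK t : A (phi (Psi' (t, 0))) = (t, 0) := PsiK' (t, 0).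
have PsiD : additive_map (A \o phi) by move=> u v; rewrite /= phiD AD.
exists (fun t => Psi' (t, 0)); split.
- move=> s t; apply: (can_inj PsiK); rewrite PsiD /= !PhiK.
  by rewrite -[RHS]/(_ + _, _ + _) addr0.
- by move=> s t /(congr1 (A \o phi)); rewrite /= !PhiK => -[].
move=> d d'; apply: (eq_vanishing_D2 fE).
apply: (eq_vanishing_D2 (g := fun v => h ((A \o phi) v + a) (+)
                                       (ip2 N c (phi v) (+) b))) => [v|]; first by rewrite addbA.
apply: vanishing_D2_xor; last by apply: vanishing_D2_affine => u v; rewrite phiD ip2D.
apply: vanishing_D2_comp => //; rewrite /= !PhiK.
exact: eq_vanishing_D2 hE (MMfun_vanishing_D2 _ _ _ _).
Qed.

End MaioranaMcFarland.

Section PropertyP.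
Variables (F K : finFieldType) (m k : nat) (pi : F -> F).
Hypothesis cardF : #|F| = (2 ^ m)%N.
Hypothesis cardK : #|K| = (2 ^ k)%N.
Hypothesis HP : propertyP m pi.

Lemma trMM_vanishing_D2 (a1 a2 b1 b2 : F) :
  vanishing_D2 (fun w : F * F => trb m (w.1 * pi w.2)) (a1, a2) (b1, b2) ->
  [\/ (a1, a2) = (0, 0), (b1, b2) = (0, 0), (a1, a2) = (b1, b2) | a2 = 0 /\ b2 = 0].
Proof.
move=> D2; suff /HP : (forall x, pi x + pi (x + a2) + pi (x + b2) + pi (x + a2 + b2) = 0)
  /\ (forall x, tr m (a1 * pi (x + a2) + b1 * pi (x + b2) + (a1 + b1) * pi (x + a2 + b2)) = 0).
  by case=> [|[|[|]]]; [constructor 1 | constructor 2 | constructor 3 | constructor 4].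
suff affine0 x : forall x1, trb m (x1 * (pi x + pi (x + a2) + pi (x + b2) + pi (x + a2 + b2))
   + (a1 * pi (x + a2) + b1 * pi (x + b2) + (a1 + b1) * pi (x + a2 + b2))) = false.
  by split=> x; have [] := trb_affine_eq0 cardF (affine0 x).
move=> x1; rewrite -(D2 (x1, x)) /= -!(trbD cardF); congr (trb m _); ring.
Qed.

Lemma fthm_slice_vanishing_D2 (u u' : F * F) (a3 b3 z : K) :
  vanishing_D2 (fthm m k pi) (u, a3, 0) (u', b3, 0) -> vanishing_D2 (fz m k pi z) u u'.
Proof.
move=> D2 x; have := D2 (x, 0, z); rewrite /fthm /= !addr0 !add0r mul0r (trb0 K k).
rewrite [(a3 + b3) * z]mulrDl (trbD cardK).
by case: (fz _ _ _ _ x); case: (fz _ _ _ _ (x + u)); case: (fz _ _ _ _ (x + u'));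
   case: (fz _ _ _ _ (x + u + u')); case: (trb k (a3 * z)); case: (trb k (b3 * z)).
Qed.

Lemma fthm_vanishing_D2 (u u' : F * F) (a3 b3 : K) :
  vanishing_D2 (fthm m k pi) (u, a3, 0) (u', b3, 0) -> [\/ u = 0, u' = 0 | u = u'].
Proof.
case: u u' => [a1 a2] [b1 b2] D2.
have [z1 trz1] := exists_tr1 cardK.
have D2_0 := fthm_slice_vanishing_D2 0 D2; have D2_1 := fthm_slice_vanishing_D2 z1 D2.
rewrite /fz (tr0 K k) trz1 eqxx oner_eq0 in D2_0 D2_1.
have D2_1' : vanishing_D2 (fun w : F * F => trb m (w.1 * pi w.2)) (a2, a1) (b2, b1).
  by move=> x; exact: D2_1 (x.2, x.1).
have [[-> ->]|[-> ->]|[-> ->]|[? ?]] := trMM_vanishing_D2 D2_0;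
  [by constructor 1 | by constructor 2 | by constructor 3 | subst a2 b2].
have [[->]|[->]|[->]|[-> ->]] := trMM_vanishing_D2 D2_1';
  [by constructor 1 | by constructor 2 | by constructor 3 | by constructor 1].
Qed.

Lemma fthm_vanishing_D2_2to1 (L : zmodType) (Phi : L -> F * F * K * K) :
  additive_map Phi -> injective Phi ->
  (forall d d', vanishing_D2 (fthm m k pi) (Phi d) (Phi d')) ->
  forall s t u, ((Phi s).1.2, (Phi s).2) = ((Phi t).1.2, (Phi t).2) ->
                ((Phi s).1.2, (Phi s).2) = ((Phi u).1.2, (Phi u).2) ->
  [\/ s = t, s = u | t = u].
Proof.
move=> PhiD Phi_inj D2Phi s t u [ys zs] [ys' zs'].
have Phi_subK a b : Phi (a - s) = Phi (b - s) -> a = b by move/Phi_inj/addIr.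
have Phi_ss : Phi (s - s) = (0, 0, 0) by rewrite additive_mapB // subrr.
have eq_x00 (v : F * F * K * K) : v.1.2 = 0 -> v.2 = 0 -> v = (v.1.1, 0, 0).
  by case: v => [[? ?] ?] /= -> ->.
have Phit : Phi (t - s) = ((Phi (t - s)).1.1, 0, 0).
  by apply: eq_x00; rewrite additive_mapB //= ?ys ?zs subrr.
have Phiu : Phi (u - s) = ((Phi (u - s)).1.1, 0, 0).
  by apply: eq_x00; rewrite additive_mapB //= ?ys' ?zs' subrr.
have := D2Phi (t - s) (u - s); rewrite Phit Phiu => /fthm_vanishing_D2[x0|x0|xx].
- by constructor 1; apply: Phi_subK; rewrite Phi_ss Phit x0.
- by constructor 2; apply: Phi_subK; rewrite Phi_ss Phiu x0.
- by constructor 3; apply: Phi_subK; rewrite Phit Phiu xx.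
Qed.

End PropertyP.

Theorem theorem3p7 (m k : nat) (F K L : finFieldType)
  (k_gt0 : (0 < k)%N) (hmk : (k + 2 < m)%N)
  (cardF : #|F| = (2 ^ m)%N) (cardK : #|K| = (2 ^ k)%N)
  (cardL : #|L| = (2 ^ (m + k))%N)
  (pi : F -> F) (pi_bij : bijective pi) (HP : propertyP m pi) :
  @isGMM F K m k (fthm m k pi) /\ ~ @inMMsharp _ L (m + k) (@fthm F K m k pi).
Proof.
split.
  exists (fz m k pi); split=> [z|//]; rewrite /fz.
  by case: (tr k z == 0); [exact: bent_trMM | exact: bent_trMM_swap].
case/(inMMsharp_vanishing_D2 cardL) => Phi [PhiD Phi_inj D2Phi].
have := card_le_2to1 (key := fun t => ((Phi t).1.2, (Phi t).2))
  (fthm_vanishing_D2_2to1 cardF cardK HP PhiD Phi_inj D2Phi).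
by rewrite card_prod cardL cardK -expnD -expnS leq_exp2l //; lia.
Qed.
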